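(* Let $p$ be a real polynomial in variables $x_1,\ldots,x_k$, and let $M$ be $100\deg(p)$ times the sum of the absolute values of the coefficients of $p$. Define $q \in \mathbb{R}[x_1,\ldots,x_k,y_1,\ldots,y_k]$ by $$q := p \prod_{i=1}^k (1-x_i)^6 + M \left(\sum_{i=1}^k \big(y_i - g(x_i)\big)\right).$$ Then the following are equivalent: (a) $q(x_1,\ldots,x_k,y_1,\ldots,y_k) < 0$ for some real $x_1,\ldots,x_k,y_1,\ldots,y_k$ with $(x_i,y_i) \in R$ for every $1 \leq i \leq k$; (b) $p(x_1,\ldots,x_k)<0$ for some $x_1,\ldots,x_k \in \{1-1/n : n \in \mathbb{N}\}$.
   Context: $g(x):=2x^2-x$. $L:[0,1)\to\mathbb{R}$ is the continuous piecewise linear function which, for every positive integer $t$, on the interval $[1-\frac1t,1-\frac1{t+1}]$ is given by $L(x)=\frac{3t^2-t-2}{t(t+1)}x-\frac{2(t-1)}{t+1}$ (the linear function agreeing with $g$ at the endpoints of that interval). $R:=\{(x,y)\in[0,1]^2: y\ge L(x)\}$ (where $x$ ranges over the domain $[0,1)$ of $L$). $\mathbb{N}=\{1,2,3,\ldots\}$. *)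

From HB Require Import structures.
From mathcomp Require Import all_boot all_order all_algebra.
From mathcomp Require Import reals.
From mathcomp Require Import mpoly.
Set Implicit Arguments. Unset Strict Implicit. Unset Printing Implicit Defensive.
Import Order.TTheory GRing.Theory Num.Theory.
Local Open Scope ring_scope.

Section Defs.
Variable R : realType.

Definition g (x : R) : R := 2 * x ^+ 2 - x.

(* The linear piece of L on the interval [1 - 1/t, 1 - 1/(t+1)] *)
Definition Lpiece (t : nat) (x : R) : R :=
  (3 * t%:R ^+ 2 - t%:R - 2) / (t%:R * (t%:R + 1)) * x
  - 2 * (t%:R - 1) / (t%:R + 1).

(* For x in [0,1), the positive integer t with x in [1-1/t, 1-1/(t+1)) is
   floor (1/(1-x)); at the common endpoints both pieces agree with g. *)
Definition L (x : R) : R := Lpiece (Num.truncn (1 / (1 - x))) x.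

Definition inRegion (x y : R) : Prop :=
  0 <= x /\ x < 1 /\ 0 <= y /\ y <= 1 /\ L x <= y.

Definition tdeg (k : nat) (p : {mpoly R[k]}) : nat := (msize p).-1.

Definition Mconst (k : nat) (p : {mpoly R[k]}) : R :=
  100 * (tdeg p)%:R * \sum_(m <- msupp p) `|p@_m|.

Definition q_eval (k : nat) (p : {mpoly R[k]}) (x y : 'I_k -> R) : R :=
  p.@[x] * \prod_(i < k) (1 - x i) ^+ 6
  + Mconst p * \sum_(i < k) (y i - g (x i)).

End Defs.

(* If (x, y) lies in R then y - g x >= L x - g x, and on the t-th piece
   L x - g x = 2 a b, where a and b are the distances from x to the bracketing
   points 1 - 1/t and 1 - 1/(t+1) of the lattice {1 - 1/n}.  Since
   (1 - x)^6 <= (1 - x)^2 <= 2 (a + b), the nearer lattice point c satisfies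
   |x - c| (1 - x)^6 <= 4 a b <= 100 (y - g x).  On [0,1]^k a polynomial is
   Lipschitz in the l^1 norm with constant deg(p) times the sum of the absolute
   values of its coefficients, so q(x, y) >= p(c) prod (1 - x_i)^6, which gives
   (a) => (b).  Conversely the points (c, g c) with c in the lattice lie on the
   graph of L, hence in R, and there q = p(c) prod (1 - c_i)^6. *)

From mathcomp Require Import all_boot all_order all_algebra.
From mathcomp Require Import reals.
From mathcomp Require Import mpoly.
From mathcomp Require Import ring lra.
Import Order.TTheory GRing.Theory Num.Theory.
Local Open Scope ring_scope.

Section UnitCube.
Variable R : numDomainType.
Local Set Implicit Arguments.
Local Unset Strict Implicit.

Lemma norm_exprB_le (a b : R) n : 0 <= a <= 1 -> 0 <= b <= 1 ->
  `|a ^+ n - b ^+ n| <= n%:R * `|a - b|.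
Proof.
move=> /andP[a0 a1] /andP[b0 b1]; elim: n => [|n IH].
  by rewrite !expr0 subrr normr0 mul0r.
have -> : a ^+ n.+1 - b ^+ n.+1 = a * (a ^+ n - b ^+ n) + b ^+ n * (a - b).
  by rewrite !exprS; ring.
apply: (le_trans (ler_normD _ _)); rewrite !normrM mulrSr mulrDl mul1r.
apply: lerD; first by rewrite ger0_norm // (le_trans (ler_piMl _ a1)).
by rewrite ger0_norm ?exprn_ge0 // ler_piMl // exprn_ile1.
Qed.

Lemma prod_unit_interval (I : Type) (r : seq I) (P : pred I) (F : I -> R) :
  (forall i, 0 <= F i <= 1) -> 0 <= \prod_(i <- r | P i) F i <= 1.
Proof.
move=> F01; apply: (big_ind (fun v => 0 <= v <= 1)) => //; first by rewrite ler01 lexx.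
move=> a b /andP[a0 a1] /andP[b0 b1].
by rewrite mulr_ge0 ?mulr_ile1.
Qed.

Lemma prod_unit_interval_le (I : finType) (F : I -> R) i :
  (forall j, 0 <= F j <= 1) -> \prod_j F j <= F i.
Proof.
move=> F01; rewrite (bigD1 i) //=.
have /andP[_ P1] := prod_unit_interval (index_enum I) (fun j => j != i) F01.
by have /andP[Fi0 _] := F01 i; rewrite ler_piMr.
Qed.

Lemma norm_prodB_le (I : Type) (r : seq I) (u w : I -> R) :
  (forall i, 0 <= u i <= 1) -> (forall i, 0 <= w i <= 1) ->
  `|\prod_(i <- r) u i - \prod_(i <- r) w i| <= \sum_(i <- r) `|u i - w i|.
Proof.
move=> u01 w01; elim: r => [|j r IH]; first by rewrite !big_nil subrr normr0.
rewrite !big_cons.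
have /andP[uj0 uj1] := u01 j.
have /andP[W0 W1] := prod_unit_interval r xpredT w01.
set U := \prod_(i <- r) u i in IH *; set W := \prod_(i <- r) w i in W0 W1 IH *.
have -> : u j * U - w j * W = u j * (U - W) + W * (u j - w j) by ring.
apply: (le_trans (ler_normD _ _)); rewrite !normrM addrC.
apply: lerD; first by rewrite ger0_norm // ler_piMl.
by rewrite ger0_norm // (le_trans (ler_piMl _ uj1)).
Qed.

Lemma meval_lipschitz k (p : {mpoly R[k]}) (x c : 'I_k -> R) :
  (forall i, 0 <= x i <= 1) -> (forall i, 0 <= c i <= 1) ->
  `|p.@[x] - p.@[c]| <=
    (\sum_(m <- msupp p) `|p@_m|) * ((msize p).-1)%:R * \sum_i `|x i - c i|.
Proof.
move=> x01 c01; rewrite !mevalE -sumrB -mulrA big_distrl /=.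
apply: (le_trans (ler_norm_sum _ _ _)); rewrite big_seq [leRHS]big_seq.
apply: ler_sum => m mp; rewrite -mulrBr normrM ler_wpM2l //.
have mx01 i : 0 <= x i ^+ m i <= 1.
  by have /andP[x0 x1] := x01 i; rewrite exprn_ge0 ?exprn_ile1.
have mc01 i : 0 <= c i ^+ m i <= 1.
  by have /andP[c0 c1] := c01 i; rewrite exprn_ge0 ?exprn_ile1.
apply: (le_trans (norm_prodB_le _ mx01 mc01)); rewrite mulr_sumr.
apply: ler_sum => i _; apply: (le_trans (norm_exprB_le _ (x01 i) (c01 i))).
rewrite ler_wpM2r // ler_nat -ltnS (leq_trans _ (leqSpred _)) //.
apply: leq_ltn_trans (msize_mdeg_lt mp).
by rewrite mdegE (bigD1 i) //= leq_addr.
Qed.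
End UnitCube.

Section Region.
Variable R : realType.
Local Set Implicit Arguments.
Local Unset Strict Implicit.

Lemma min_mul_le (a b c : R) : 0 <= a -> 0 <= b -> c <= 2 * (a + b) ->
  Num.min a b * c <= 4 * (a * b).
Proof.
move=> a0 b0 c_le; have [ab|ba] := lerP a b.
- by rewrite (le_trans (ler_wpM2l a0 c_le)) //; nra.
- by rewrite (le_trans (ler_wpM2l b0 c_le)) //; nra.
Qed.

Lemma exp6_le_inv_gap (T s : R) : 1 <= T -> 0 < s <= 1 / T ->
  s ^+ 6 <= 2 * (1 / T - 1 / (T + 1)).
Proof.
move=> T1 /andP[s0 sT].
have gap : 1 / T - 1 / (T + 1) = 1 / T * (1 / (T + 1)).
  by field; rewrite -?addrA ?gt_eqF //; lra.
have s1 : s <= 1 by rewrite (le_trans sT) // ler_pdivrMr ?mul1r //; lra.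
have s6 : s ^+ 6 <= s ^+ 2 by apply: ler_wiXn2l => //; apply: ltW.
have inv2 : 1 / T <= 2 * (1 / (T + 1)).
  rewrite -subr_ge0 (_ : _ - _ = (T - 1) / (T * (T + 1))).
    by rewrite divr_ge0 ?mulr_ge0; lra.
  by field; rewrite -?addrA ?gt_eqF //; lra.
rewrite gap (le_trans s6) // expr2 mulrCA.
by apply: ler_pM; [exact: ltW | exact: ltW | exact: sT | exact: le_trans sT inv2].
Qed.

Lemma truncn_inv_bracket (s : R) t : 0 < s <= 1 -> Num.truncn (1 / s) = t ->
  (0 < t)%N /\ 1 / (t%:R + 1) < s <= 1 / t%:R.
Proof.
move=> /andP[s0 s1] <-.
have /andP[tl tu] := truncn_itv (ltW (divr_gt0 ltr01 s0)).
rewrite -natr1 in tu.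
have inv_s1 : 1 <= 1 / s by rewrite ler_pdivlMr // mul1r.
have t0 : (0 : R) < (Num.truncn (1 / s))%:R by lra.
have t1 : (0 : R) < (Num.truncn (1 / s))%:R + 1 by lra.
split; first by rewrite ltr0n in t0.
move: tl tu; rewrite ler_pdivlMr // ltr_pdivrMr // ltr_pdivrMr // ler_pdivlMr //.
lra.
Qed.

Lemma Lpiece_subg (t : nat) (x : R) : (0 < t)%N ->
  Lpiece t x - g x = 2 * (x - (1 - 1 / t%:R)) * ((1 - 1 / (t%:R + 1)) - x).
Proof.
move=> t0; have T0 : (t%:R : R) != 0 by rewrite pnatr_eq0 -lt0n.
have T1 : (t%:R + 1 : R) != 0 by rewrite natr1 pnatr_eq0.
by rewrite /Lpiece /g; field; rewrite T0 T1.
Qed.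

Lemma near_lattice (x : R) : 0 <= x < 1 -> exists n : nat,
  (0 < n)%N /\ `|x - (1 - 1 / n%:R)| * (1 - x) ^+ 6 <= 100 * (L x - g x).
Proof.
move=> /andP[x0 x1]; have s01 : 0 < 1 - x <= 1 by apply/andP; split; lra.
have := truncn_inv_bracket s01; rewrite /L; move: (Num.truncn _) => t.
move=> /(_ t erefl) [t0 /andP[lo hi]]; rewrite Lpiece_subg //.
set a := 1 / t%:R - (1 - x); set b := (1 - x) - 1 / (t%:R + 1).
have a0 : 0 <= a by rewrite subr_ge0.
have b0 : 0 <= b by rewrite subr_ge0 ltW.
have Lg : 2 * (x - (1 - 1 / t%:R)) * ((1 - 1 / (t%:R + 1)) - x) = 2 * (a * b).
  by rewrite /a /b; ring.
have s6 : (1 - x) ^+ 6 <= 2 * (a + b).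
  have -> : a + b = 1 / t%:R - 1 / (t%:R + 1) by rewrite /a /b; ring.
  by apply: exp6_le_inv_gap; rewrite ?ler1n // hi andbT; lra.
have ab0 : 0 <= a * b by exact: mulr_ge0.
have := min_mul_le a0 b0 s6; rewrite Lg.
suff [n n0 dist] : exists2 n : nat, (0 < n)%N & `|x - (1 - 1 / n%:R)| = Num.min a b.
  by move=> key; exists n; split; rewrite // dist; lra.
have [ab|ba] := lerP a b.
- by exists t => //; rewrite (_ : _ - _ = a) ?ger0_norm // /a; ring.
- exists t.+1 => //; rewrite -natr1 (_ : _ - _ = - b) ?normrN ?ger0_norm //.
  by rewrite /b; ring.
Qed.

Lemma lattice_gap_bounds (n : nat) : (0 < n)%N -> 0 < (1 / n%:R : R) <= 1.
Proof.
move=> n0; have n1 : (1 : R) <= n%:R by rewrite ler1n.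
by rewrite divr_gt0 ?ler_pdivrMr ?mul1r //; lra.
Qed.

Lemma g_lattice_unit (n : nat) : (0 < n)%N -> 0 <= g (1 - 1 / n%:R : R) <= 1.
Proof.
move=> n0; have /andP[a0 a1] := lattice_gap_bounds n0.
have -> : g (1 - 1 / n%:R : R) = (1 - 1 / n%:R) * (1 - 2 * (1 / n%:R)).
  by rewrite /g; ring.
have [->|n2] := eqVneq n 1%N; first by rewrite divr1; lra.
have n2' : (2 : R) <= n%:R by rewrite ler_nat ltn_neqAle eq_sym n2.
have a2 : 1 / n%:R <= 1 / 2 :> R by rewrite ler_pdivrMr; lra.
by apply/andP; split; nra.
Qed.

Lemma L_lattice (n : nat) : (0 < n)%N -> L (1 - 1 / n%:R : R) = g (1 - 1 / n%:R).
Proof.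
move=> n0; rewrite /L (_ : 1 - (1 - _) = 1 / n%:R); last by ring.
rewrite !div1r invrK natrK; apply/eqP; rewrite -subr_eq0 Lpiece_subg //.
by rewrite div1r subrr mulr0 mul0r.
Qed.

Lemma inRegion_lattice (n : nat) : (0 < n)%N ->
  inRegion (1 - 1 / n%:R : R) (g (1 - 1 / n%:R)).
Proof.
move=> n0; have /andP[a0 a1] := lattice_gap_bounds n0.
have /andP[g0 g1] := g_lattice_unit n0.
by rewrite /inRegion L_lattice //; do !split; lra.
Qed.

Lemma q_eval_graph k (p : {mpoly R[k]}) (x : 'I_k -> R) :
  q_eval p x (fun i => g (x i)) = p.@[x] * \prod_(i < k) (1 - x i) ^+ 6.
Proof. by rewrite /q_eval sumrB subrr mulr0 addr0. Qed.

Lemma q_eval_ge_meval k (p : {mpoly R[k]}) (x y c : 'I_k -> R) :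
  (forall i, inRegion (x i) (y i)) -> (forall i, 0 <= c i <= 1) ->
  (forall i, `|x i - c i| * (1 - x i) ^+ 6 <= 100 * (L (x i) - g (x i))) ->
  p.@[c] * \prod_(i < k) (1 - x i) ^+ 6 <= q_eval p x y.
Proof.
move=> xyR c01 near.
have x01 i : 0 <= x i <= 1 by have [x0 [x1 _]] := xyR i; rewrite x0 ltW.
have w01 i : 0 <= (1 - x i) ^+ 6 <= 1.
  by have /andP[x0 x1] := x01 i; rewrite exprn_ge0 ?exprn_ile1 //; lra.
rewrite /q_eval /Mconst.
set P := \prod_(i < k) _; set S := \sum_(m <- msupp p) _.
set d := (tdeg p)%:R; set D := \sum_i `|x i - c i|.
have P0 : 0 <= P by case/andP: (prod_unit_interval (index_enum _) xpredT w01).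
have S0 : 0 <= S by rewrite sumr_ge0.
have d0 : 0 <= d by rewrite ler0n.
have DP : D * P <= 100 * \sum_i (y i - g (x i)).
  rewrite mulr_suml mulr_sumr; apply: ler_sum => i _.
  have [_ [_ [_ [_ Ly]]]] := xyR i.
  apply: le_trans (le_trans (near i) _).
    by rewrite ler_wpM2l ?prod_unit_interval_le.
  by rewrite ler_wpM2l //; lra.
have /andP[lip _] : - (S * d * D) <= p.@[x] - p.@[c] <= S * d * D.
  by rewrite -ler_norml meval_lipschitz.
have SdDP : S * d * (D * P) <= S * d * (100 * \sum_i (y i - g (x i))).
  by rewrite ler_wpM2l ?mulr_ge0.
nra.
Qed.
End Region.

Theorem lemma5p3 (R : realType) (k : nat) (p : {mpoly R[k]}) :
  (exists x y : 'I_k -> R,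
      (forall i, inRegion (x i) (y i)) /\ q_eval p x y < 0)
  <->
  (exists x : 'I_k -> R,
      (forall i, exists n : nat, (0 < n)%N /\ x i = 1 - 1 / n%:R) /\
      p.@[x] < 0).
Proof.
split.
- move=> [x [y [xyR q_neg]]].
  have x01 i : 0 <= x i < 1 by have [x0 [x1 _]] := xyR i; rewrite x0.
  have [n nP] := fin_all_exists (fun i => near_lattice (x01 i)).
  pose c i := 1 - 1 / (n i)%:R : R.
  have c01 i : 0 <= c i <= 1.
    by have /andP[a0 a1] := lattice_gap_bounds R (proj1 (nP i)); rewrite /c; lra.
  exists c; split; first by move=> i; exists (n i); case: (nP i).
  have := q_eval_ge_meval p xyR c01 (fun i => proj2 (nP i)).
  have P0 : 0 <= \prod_(i < k) (1 - x i) ^+ 6.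
    rewrite prodr_ge0 // => i _; have /andP[_ x1] := x01 i.
    by rewrite exprn_ge0 // subr_ge0 ltW.
  nra.
- move=> [c [c_lat p_neg]]; exists c, (fun i => g (c i)); split.
    by move=> i; have [n [n0 ->]] := c_lat i; apply: inRegion_lattice.
  rewrite q_eval_graph pmulr_llt0 // prodr_gt0 // => i _.
  have [n [n0 ->]] := c_lat i; have /andP[a0 _] := lattice_gap_bounds R n0.
  by rewrite exprn_gt0 //; lra.
Qed.
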